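(* Let $n,m\in\mathbb{N}$ with $\gcd(n,m)=1$ and let $\{R_j^{nm,n}\}_{j\in I_{nm,n}}$ be a system of representatives of the right cosets in $\Gamma_0(nm)\backslash\Gamma_0(n)$. Then for every $j\in I_{nm,n}$ there exists a matrix $A(j)\in X_m^\star$ such that $B_m R_j^{nm,n}A(j)^{-1}\in\Gamma_0(n)$, and the map $j\mapsto A(j)$ is a bijection from $I_{nm,n}$ onto $X_m^\star$.
   Context: $\Gamma_0(n)=\{\begin{pmatrix}a&b\\c&d\end{pmatrix}\in SL(2,\mathbb{Z}):n\mid c\}$. $B_m=\begin{pmatrix}m&0\\0&1\end{pmatrix}$. $X_m^\star=\{\begin{pmatrix}c&b\\0&m/c\end{pmatrix}:c\ge1,\ c\mid m,\ 0\le b\le m/c-1,\ \gcd(c,b,m/c)=1\}$. $I_{nm,n}=\{1,\dots,[\Gamma_0(n):\Gamma_0(nm)]\}$. *)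

From HB Require Import structures.
From mathcomp Require Import all_boot all_order all_algebra.
Set Implicit Arguments. Unset Strict Implicit. Unset Printing Implicit Defensive.
Import Order.TTheory GRing.Theory Num.Theory.
Local Open Scope ring_scope.

Definition mx2 {R : Type} (a b c d : R) : 'M[R]_2 :=
  \matrix_(i < 2, j < 2)
    if (i : nat) == 0%N then (if (j : nat) == 0%N then a else b)
    else (if (j : nat) == 0%N then c else d).

Definition Gamma0 (n : nat) : pred 'M[int]_2 :=
  fun g => (\det g == 1) && (n%:Z %| g ord_max ord0)%Z.

Definition Bm (m : nat) : 'M[int]_2 := mx2 (m%:Z) 0 0 1.

Definition Xstar (m : nat) : pred 'M[int]_2 :=
  fun A => let c := A ord0 ord0 in let b := A ord0 ord_max in
    [&& A == mx2 c b 0 (m%:Z %/ c)%Z, 1 <= c, (c %| m%:Z)%Z,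
        0 <= b, b <= (m%:Z %/ c)%Z - 1 &
        gcdz (gcdz c b) (m%:Z %/ c)%Z == 1].

Definition toQ (A : 'M[int]_2) : 'M[rat]_2 := map_mx (fun z : int => z%:~R) A.

Definition in_right_coset (N : nat) (r g : 'M[int]_2) : Prop :=
  exists2 h, h \in Gamma0 N & g = h *m r.

(* R_0, ..., R_{k-1} (indexing I_{nm,n} = {1..k} shifted to 'I_k) is a system of
   representatives of the right cosets Gamma_0(nm) \ Gamma_0(n). *)
Definition right_coset_reps (n m k : nat) (R : 'I_k -> 'M[int]_2) : Prop :=
  [/\ forall j, R j \in Gamma0 n,
      forall g, g \in Gamma0 n -> exists j, in_right_coset (n * m) (R j) g
    & forall i j g, in_right_coset (n * m) (R i) g ->
                    in_right_coset (n * m) (R j) g -> i = j].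

Definition BRAinv_in_Gamma0 (n m : nat) (R A : 'M[int]_2) : Prop :=
  exists2 g, g \in Gamma0 n & toQ g = toQ (Bm m) *m toQ R *m invmx (toQ A).

(* Every integer matrix of positive determinant factors as g * [x y; 0 z] with
   g in SL2(Z), x > 0 and 0 <= y < z, and this Hermite form is unique.  For R in
   Gamma0(n), the Hermite form of B_m R lies in X_m^*: x divides m, so coprimality
   of n and m puts g in Gamma0(n), and gcd(x, y, z) divides the bottom row of R,
   hence det R = 1.  This is A(j): the relation g A = B_m R says that
   B_m R A^-1 = g lies in Gamma0(n).  Since B_m h B_m^-1 lies in Gamma0(n)
   exactly when h lies in Gamma0(nm), two representatives with the same A lie
   in the same coset.
   Conversely every [x y; 0 z] in X_m^* is reached from an explicit R, built
   from some s with gcd(z s + n y, n x) = 1. *)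

From HB Require Import structures.
From mathcomp Require Import all_boot all_order all_algebra.
From mathcomp Require Import zify ring.

Set Implicit Arguments.
Unset Strict Implicit.
Unset Printing Implicit Defensive.

Import Order.TTheory GRing.Theory Num.Theory.

Lemma coprime_mul_add_exists (a b N : nat) :
  0 < N -> coprime (gcdn a b) N -> exists s, coprime (a * s + b) N.
Proof.
(* Each prime of N divides exactly one of b and N`_pi, so it divides a * N`_pi + b
   only if it divides both a and b. *)
move=> N_gt0 co_abN; pose pi := [pred p | ~~ (p %| b)]; exists N`_pi.
set u := a * N`_pi + b; apply: contraT => not_co.
have gcd_gt1 : 1 < gcdn u N.
  by move: not_co; rewrite /coprime; have := gcdn_gt0 u N; rewrite N_gt0 orbT; lia.
have [p p_pr /[!dvdn_gcd] /andP[p_u p_N]] := pdivP gcd_gt1.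
have p_part : (p %| N`_pi) = ~~ (p %| b).
  apply/idP/idP => [p_Npi | p_pi].
    by have := pnat_dvd p_Npi (part_pnat pi N); rewrite pnatE.
  move: p_N; rewrite -{1}(partnC pi N_gt0) Euclid_dvdM // => /orP[-> // | p_Npi'].
  by have := pnat_dvd p_Npi' (part_pnat pi^' N); rewrite pnatE // !inE /= p_pi.
have [p_b | p_b] := boolP (p %| b).
  have p_a : p %| a.
    by move: p_u; rewrite /u dvdn_addl // Euclid_dvdM // p_part p_b orbF.
  have := coprime_dvdl (_ : p %| gcdn a b) co_abN.
  by rewrite dvdn_gcd p_a p_b prime_coprime // p_N => /(_ isT).
by move: p_u; rewrite /u dvdn_addr ?dvdn_mull ?p_part // (negPf p_b).
Qed.

Local Open Scope ring_scope.

Lemma mx2_ex (R : Type) (M : 'M[R]_2) : exists a b c d, M = mx2 a b c d.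
Proof.
exists (M 0 0), (M 0 1), (M 1 0), (M 1 1); apply/matrixP=> i j; rewrite !mxE.
by case: i => [[|[|]]] //= ?; case: j => [[|[|]]] //= ?; congr (M _ _); apply: val_inj.
Qed.

Lemma mx2_inj {R : Type} {a b c d a' b' c' d' : R} :
  mx2 a b c d = mx2 a' b' c' d' -> [/\ a = a', b = b', c = c' & d = d'].
Proof.
move=> e; have E i j := congr1 (fun M : 'M[R]_2 => M i j) e.
by move: (E 0 0) (E 0 1) (E 1 0) (E 1 1); rewrite !mxE.
Qed.

Section Mx2Ring.
Variable R : comPzRingType.
Implicit Types a b c d : R.

Lemma mulmx2 a b c d a' b' c' d' :
  mx2 a b c d *m mx2 a' b' c' d' =
  mx2 (a * a' + b * c') (a * b' + b * d') (c * a' + d * c') (c * b' + d * d').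
Proof.
apply/matrixP=> i j; rewrite !mxE big_ord_recr big_ord1 /= !mxE.
by case: i => [[|[|]]] //= ?; case: j => [[|[|]]] //= ?.
Qed.

Lemma det_mx2 a b c d : \det (mx2 a b c d) = a * d - b * c.
Proof.
rewrite (expand_det_row _ 0) big_ord_recr big_ord1 /= !mxE /cofactor /=.
by rewrite !det_mx11 !mxE /= expr0 expr1; ring.
Qed.

Lemma adj_mx2 a b c d : \adj (mx2 a b c d) = mx2 d (- b) (- c) a.
Proof.
apply/matrixP=> i j; rewrite !mxE /cofactor det_mx11 !mxE.
by case: i => [[|[|]]] //= ?; case: j => [[|[|]]] //= ?; rewrite ?expr0 ?expr1 ?expr2 /=; ring.
Qed.

End Mx2Ring.

Lemma hermite_factorization (M : 'M[int]_2) : 0 < \det M ->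
  exists g x y z, [/\ \det g = 1, M = g *m mx2 x y 0 z, 0 < x & 0 <= y < z].
Proof.
(* Column reduction by a Bezout relation for x = gcd(a, c), then y mod z. *)
have [a [b [c [d ->]]]] := mx2_ex M; move=> detM.
pose x := gcdz a c.
have x_gt0 : 0 < x.
  rewrite lt0r le0z_nat andbT gcdz_eq0; apply: contraTN detM.
  by case/andP=> /eqP-> /eqP->; rewrite det_mx2 !mul0r mulr0 subrr.
have [a' ea] : exists a', a = a' * x := dvdzP (dvdz_gcdl a c).
have [c' ec] : exists c', c = c' * x := dvdzP (dvdz_gcdr a c).
have [u [v bez]] := Bezoutz a c; rewrite -/x in bez.
clearbody x; subst a c.
have bez' : a' * u + v * c' = 1.
  by apply: (mulIf (lt0r_neq0 x_gt0)); rewrite mul1r -[RHS]bez; ring.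
pose g1 := mx2 a' (- v) c' u.
have det_g1 : \det g1 = 1 by rewrite det_mx2 -bez'; ring.
pose y0 := u * b + v * d; pose z := a' * d - c' * b.
have eM : mx2 (a' * x) b (c' * x) d = g1 *m mx2 x y0 0 z.
  rewrite -[LHS]mul1mx -det_g1 -mul_mx_adj -mulmxA; congr (_ *m _).
  by rewrite adj_mx2 mulmx2 opprK; congr mx2; [exact: bez | ring | rewrite /z; ring].
have z_gt0 : 0 < z.
  by move: detM; rewrite eM det_mulmx det_g1 mul1r det_mx2 mulr0 subr0 pmulr_rgt0.
exists (g1 *m mx2 1 (y0 %/ z)%Z 0 1), x, (y0 %% z)%Z, z; split=> //.
- by rewrite det_mulmx det_g1 det_mx2; ring.
- rewrite eM -mulmxA [mx2 1 _ 0 1 *m _]mulmx2 {1}(divz_eq y0 z).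
  by congr (_ *m _); congr mx2; ring.
- by rewrite modz_ge0 ?ltz_pmod ?lt0r_neq0.
Qed.

Lemma hermite_unique (g g' : 'M[int]_2) (x y z x' y' z' : int) :
  \det g = 1 -> \det g' = 1 -> g *m mx2 x y 0 z = g' *m mx2 x' y' 0 z' ->
  x != 0 -> 0 <= y < z -> 0 <= y' < z' -> [/\ x = x', y = y' & z = z'].
Proof.
(* h = adj g' * g lies in SL2(Z) and maps one Hermite form to the other, so it is
   [1 q; 0 1], and the bounds on y and y' force q = 0. *)
move=> det_g det_g' e x_neq0 y_range y'_range.
have [p [q [r [s eh]]]] := mx2_ex (\adj g' *m g).
have det_h : p * s - q * r = 1.
  have := congr1 determinant (mul_adj_mx g'); rewrite det_mulmx det_g' mulr1 det1.
  by rewrite -det_mx2 -eh det_mulmx det_g mulr1.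
have : mx2 p q r s *m mx2 x y 0 z = mx2 x' y' 0 z'.
  by rewrite -eh -mulmxA e mulmxA mul_adj_mx det_g' mul1mx.
rewrite mulmx2 => /mx2_inj[ex ey ez ez'].
have r0 : r = 0.
  by apply/eqP; move: ez; rewrite mulr0 addr0 => /eqP; rewrite mulf_eq0 (negPf x_neq0) orbF.
subst r; rewrite ?(mulr0, mul0r, addr0, add0r, subr0) in ex ey ez' det_h.
have s_gt0 : 0 < s by nia.
have p_gt0 : 0 < p by nia.
have [p1 s1] : p = 1 /\ s = 1 by nia.
subst p s; rewrite ?mul1r in ex ey ez'.
have q0 : q = 0.
  have : - z < q * z < z by lia.
  nia.
by rewrite -ey q0 mul0r addr0.
Qed.

Section Gamma0.
Variable n : nat.
Implicit Types (a b c d : int) (g h : 'M[int]_2).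

Lemma Gamma0E g : (g \in Gamma0 n) = (\det g == 1) && (n%:Z %| g ord_max ord0)%Z.
Proof. by []. Qed.

Lemma Gamma0_mx2P a b c d :
  reflect (a * d - b * c = 1 /\ (n%:Z %| c)%Z) (mx2 a b c d \in Gamma0 n).
Proof. by rewrite Gamma0E det_mx2 !mxE /=; apply: (iffP andP) => -[/eqP]. Qed.

Lemma Gamma0_det g : g \in Gamma0 n -> \det g = 1.
Proof. by rewrite Gamma0E => /andP[/eqP]. Qed.

Lemma Gamma0_1 : 1%:M \in Gamma0 n.
Proof. by rewrite Gamma0E det1 eqxx mxE /= dvdz0. Qed.

Lemma Gamma0M g h : g \in Gamma0 n -> h \in Gamma0 n -> g *m h \in Gamma0 n.
Proof.
move=> gG hG; rewrite Gamma0E det_mulmx (Gamma0_det gG) (Gamma0_det hG) mulr1 /=.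
have [a [b [c [d eg]]]] := mx2_ex g; have [a' [b' [c' [d' eh]]]] := mx2_ex h.
move: gG hG; rewrite eg eh mulmx2 mxE /=.
move=> /Gamma0_mx2P[_ n_c] /Gamma0_mx2P[_ n_c'].
by apply: rpredD; [exact: dvdz_mulr | exact: dvdz_mull].
Qed.

Lemma Gamma0_adj g : g \in Gamma0 n -> \adj g \in Gamma0 n.
Proof.
have [a [b [c [d ->]]]] := mx2_ex g; rewrite adj_mx2 => /Gamma0_mx2P[det_g n_c].
by apply/Gamma0_mx2P; rewrite rpredN; split=> //; rewrite -det_g; ring.
Qed.

End Gamma0.

Lemma det_Bm m : \det (Bm m) = m%:Z.
Proof. by rewrite det_mx2; ring. Qed.

Lemma mulBm_mx2 m (a b c d : int) :
  Bm m *m mx2 a b c d = mx2 (m%:Z * a) (m%:Z * b) c d.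
Proof. by rewrite mulmx2; congr mx2; ring. Qed.

Lemma mulmx2_Bm m (a b c d : int) :
  mx2 a b c d *m Bm m = mx2 (a * m%:Z) b (c * m%:Z) d.
Proof. by rewrite mulmx2; congr mx2; ring. Qed.

Lemma XstarP m (X : 'M[int]_2) :
  reflect (exists x y z, X = mx2 x y 0 z /\
             [/\ x * z = m%:Z, 0 < x, 0 <= y < z & gcdz (gcdz x y) z = 1])
          (X \in Xstar m).
Proof.
apply: (iffP idP) => [|[x [y [z [-> [xz x_gt0 /andP[y_ge0 y_lt_z] g1]]]]]].
  rewrite unfold_in /Xstar => /and5P[/eqP eX x_ge1 x_m y_ge0 /andP[y_le /eqP g1]].
  exists (X ord0 ord0), (X ord0 ord_max), (m%:Z %/ X ord0 ord0)%Z; split=> //.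
  by split=> //; [rewrite mulrC divzK | rewrite y_ge0 /=; lia].
rewrite unfold_in /Xstar !mxE /=.
have -> : (m%:Z %/ x)%Z = z by rewrite -xz mulKz ?lt0r_neq0.
rewrite eqxx g1 y_ge0 /=.
by apply/and4P; split=> //; [apply/dvdzP; exists z; rewrite -xz mulrC | lia].
Qed.

Lemma Xstar_det_neq0 m (X : 'M[int]_2) : (0 < m)%N -> X \in Xstar m -> \det X != 0.
Proof. by move=> m_gt0 /XstarP[x [y [z [-> [xz _ _ _]]]]]; rewrite det_mx2 mulr0 subr0 xz; lia. Qed.

Definition Bm_rel (n m : nat) (R X : 'M[int]_2) : Prop :=
  exists2 g, g \in Gamma0 n & g *m X = Bm m *m R.

Lemma BRAinv_in_Gamma0E n m (R X : 'M[int]_2) :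
  \det X != 0 -> BRAinv_in_Gamma0 n m R X <-> Bm_rel n m R X.
Proof.
move=> detX_neq0; have toQM A B : toQ (A *m B) = toQ A *m toQ B := map_mxM _ A B.
have toQ_inj : injective toQ.
  by move=> A B /matrixP eAB; apply/matrixP=> i j; have := eAB i j; rewrite !mxE => /intr_inj.
have X_unit : toQ X \in unitmx.
  by rewrite unitmxE unitfE (_ : \det _ = (\det X)%:~R) ?intr_eq0 // /toQ -det_map_mx.
split=> -[g g_in e]; exists g => //.
  by apply: toQ_inj; rewrite !toQM e mulmxKV.
by rewrite -(mulmxK X_unit (toQ g)) -(toQM g X) e toQM.
Qed.

Section Bm_rel.
Variables n m : nat.
Hypothesis m_gt0 : (0 < m)%N.

Lemma Gamma0_conj_Bm (h : 'M[int]_2) :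
  h \in Gamma0 (n * m) <-> exists2 g, g \in Gamma0 n & g *m Bm m = Bm m *m h.
Proof.
have [a [b [c [d ->]]]] := mx2_ex h.
split=> [/Gamma0_mx2P[det_h /dvdzP[t e_c]] | [g g_in e]].
  subst c; rewrite PoszM in det_h *.
  exists (mx2 a (m%:Z * b) (t * n%:Z) d); last by rewrite mulmx2_Bm mulBm_mx2; congr mx2; ring.
  by apply/Gamma0_mx2P; split; [rewrite -det_h; ring | apply: dvdz_mull].
have det_h : \det (mx2 a b c d) = 1.
  apply: (mulIf (_ : m%:Z != 0)); first by lia.
  by rewrite -det_Bm mulrC -det_mulmx -e det_mulmx (Gamma0_det g_in) mul1r.
have [p [q [r [s eg]]]] := mx2_ex g.
move: g_in e; rewrite eg mulmx2_Bm mulBm_mx2 det_mx2 in det_h *.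
move=> /Gamma0_mx2P[_ n_r] /mx2_inj[_ _ e_c _]; subst c.
by apply/Gamma0_mx2P; split=> //; rewrite PoszM; apply: dvdz_mul.
Qed.

Lemma Bm_rel_coset (Ri Rj X : 'M[int]_2) : Rj \in Gamma0 n ->
  Bm_rel n m Ri X -> Bm_rel n m Rj X -> in_right_coset (n * m) Rj Ri.
Proof.
move=> Rj_in [gi gi_in ei] [gj gj_in ej].
have X_adj : X *m \adj Rj = \adj gj *m Bm m.
  have -> : X = \adj gj *m Bm m *m Rj.
    by rewrite -mulmxA -ej mulmxA mul_adj_mx (Gamma0_det gj_in) mul1mx.
  by rewrite -!mulmxA mul_mx_adj (Gamma0_det Rj_in) mulmx1.
exists (Ri *m \adj Rj); last by rewrite -mulmxA mul_adj_mx (Gamma0_det Rj_in) mulmx1.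
apply/Gamma0_conj_Bm; exists (gi *m \adj gj); first by rewrite Gamma0M ?Gamma0_adj.
by rewrite mulmxA -ei -!mulmxA X_adj.
Qed.

Lemma Bm_rel_Gamma0_mull (h R X : 'M[int]_2) :
  h \in Gamma0 (n * m) -> Bm_rel n m (h *m R) X -> Bm_rel n m R X.
Proof.
move=> /Gamma0_conj_Bm[g g_in eg] [g0 g0_in e0].
exists (\adj g *m g0); first by rewrite Gamma0M ?Gamma0_adj.
by rewrite -mulmxA e0 (mulmxA (Bm m)) -eg !mulmxA mul_adj_mx (Gamma0_det g_in) mul1mx.
Qed.

Lemma Bm_rel_unique (R X Y : 'M[int]_2) : X \in Xstar m -> Y \in Xstar m ->
  Bm_rel n m R X -> Bm_rel n m R Y -> X = Y.
Proof.
move=> /XstarP[x [y [z [-> [_ x_gt0 y_range _]]]]] /XstarP[x' [y' [z' [-> [_ _ y'_range _]]]]].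
move=> [g g_in eg] [g' g'_in eg'].
by have [-> -> ->] := hermite_unique (Gamma0_det g_in) (Gamma0_det g'_in)
  (etrans eg (esym eg')) (lt0r_neq0 x_gt0) y_range y'_range.
Qed.

Lemma Bm_rel_exists (R : 'M[int]_2) : coprime n m -> R \in Gamma0 n ->
  exists2 X, X \in Xstar m & Bm_rel n m R X.
Proof.
move=> co_nm R_in.
have det_BmR : \det (Bm m *m R) = m%:Z by rewrite det_mulmx det_Bm (Gamma0_det R_in) mulr1.
have /hermite_factorization[g [x [y [z [det_g eBmR x_gt0 y_range]]]]] :
  0 < \det (Bm m *m R) by rewrite det_BmR ltz_nat.
have xz : x * z = m%:Z by rewrite -det_BmR eBmR det_mulmx det_g mul1r det_mx2; ring.
have [a [b [c [d eR]]]] := mx2_ex R; have [p [q [r [s eg]]]] := mx2_ex g.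
move: det_g R_in eBmR; rewrite eR eg det_mx2 mulBm_mx2 mulmx2.
move=> det_g /Gamma0_mx2P[det_R n_c] /mx2_inj[e_a e_b e_c e_d].
rewrite mulr0 addr0 in e_c; subst c d.
exists (mx2 x y 0 z).
  apply/XstarP; exists x, y, z; split=> //; split=> //.
  (* e divides the bottom row of B_m R = g X, which is the bottom row of R. *)
  set e := gcdz (gcdz x y) z.
  have e_x : (e %| x)%Z := dvdz_trans (dvdz_gcdl _ _) (dvdz_gcdl _ _).
  have e_y : (e %| y)%Z := dvdz_trans (dvdz_gcdl _ _) (dvdz_gcdr _ _).
  have e_z : (e %| z)%Z := dvdz_gcdr _ _.
  have : (e %| a * (r * y + s * z) - b * (r * x))%Z.
    apply: rpredB; apply: dvdz_mull; last exact: dvdz_mull.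
    by apply: rpredD; apply: dvdz_mull.
  by rewrite det_R dvdz1 /e /gcdz /= => /eqP ->.
exists (mx2 p q r s); last by rewrite mulmx2 mulBm_mx2 e_a e_b !mulr0 !addr0.
apply/Gamma0_mx2P; split=> //.
have x_m : (x %| m%:Z)%Z by apply/dvdzP; exists z; rewrite mulrC.
by rewrite -(Gauss_dvdzl _ (_ : coprimez n x)) // coprimezE (coprime_dvdr x_m co_nm).
Qed.

Lemma Xstar_Bm_rel_exists (X : 'M[int]_2) : (0 < n)%N -> coprime n m ->
  X \in Xstar m -> exists2 R, R \in Gamma0 n & Bm_rel n m R X.
Proof.
move=> n_gt0 co_nm /XstarP[x [y [z [-> [xz x_gt0 /andP[y_ge0 y_lt_z] g1]]]]].
have [s co_s] : exists s : int, coprimez (z * s + n%:Z * y) (n%:Z * x).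
  have [x' ex] : exists x' : nat, x = x'%:Z by exists `|x|%N; rewrite gez0_abs ?ltW.
  have [y' ey] : exists y' : nat, y = y'%:Z by exists `|y|%N; rewrite gez0_abs.
  have [z' ez] : exists z' : nat, z = z'%:Z by exists `|z|%N; rewrite gez0_abs //; lia.
  subst x y z; case: g1 => g1.
  have co_zn : coprime z' n.
    rewrite coprime_sym (coprime_dvdr _ co_nm) //; apply/dvdnP; exists x'.
    by apply/eqP; rewrite -eqz_nat PoszM -xz mulrC.
  have co : coprime (gcdn z' (n * y')) (n * x').
    rewrite Gauss_gcdr // coprimeMr (coprime_dvdl (dvdn_gcdl _ _) co_zn) /=.
    by rewrite /coprime gcdnC gcdnA gcdnAC g1.
  have [|s' co_s'] := coprime_mul_add_exists _ co; first by rewrite muln_gt0 n_gt0; lia.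
  by exists s'%:Z; rewrite -!PoszM -PoszD coprimezE.
(* With g = [z P, -P y - x Q; n, s], the first row of g X is m [P, -Q]. *)
have /coprimezP[[P Q] /= bez] := co_s.
exists (mx2 P (- Q) (n%:Z * x) (n%:Z * y + s * z)).
  by apply/Gamma0_mx2P; split; [rewrite -bez; ring | apply: dvdz_mulr].
exists (mx2 (z * P) (- (P * y) - x * Q) n%:Z s).
  by apply/Gamma0_mx2P; split; [rewrite -bez; ring | ].
by rewrite mulmx2 mulBm_mx2 -xz; congr mx2; ring.
Qed.

End Bm_rel.

Theorem mainTheorem5 (n m : nat) (hn : (0 < n)%N) (hm : (0 < m)%N)
  (hcop : coprime n m) (k : nat) (R : 'I_k -> 'M[int]_2)
  (hR : right_coset_reps n m R) :
  (forall j : 'I_k, exists2 A, A \in Xstar m & BRAinv_in_Gamma0 n m (R j) A) /\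
  (forall A : 'I_k -> 'M[int]_2,
     (forall j, A j \in Xstar m /\ BRAinv_in_Gamma0 n m (R j) (A j)) ->
     injective A /\ (forall X, X \in Xstar m -> exists j, A j = X)).
Proof.
have [R_in R_cover R_uniq] := hR.
have relE X : X \in Xstar m -> forall j, BRAinv_in_Gamma0 n m (R j) X <-> Bm_rel n m (R j) X.
  by move=> X_in j; apply: BRAinv_in_Gamma0E; exact: Xstar_det_neq0 hm X_in.
split=> [j | A hA].
  by have [X X_in relX] := Bm_rel_exists hm hcop (R_in j); exists X; rewrite ?relE.
have relA j : Bm_rel n m (R j) (A j) by have [A_in] := hA j; rewrite relE.
split=> [i j eA | X X_in].
  apply: (R_uniq i j (R i)); first by exists 1%:M; rewrite ?mul1mx ?Gamma0_1.
  by apply: (Bm_rel_coset hm (R_in j) (relA i)); rewrite eA.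
have [R0 R0_in relX] := Xstar_Bm_rel_exists hm hn hcop X_in.
have [j [h h_in eR0]] := R_cover R0 R0_in.
rewrite eR0 in relX; exists j.
exact: Bm_rel_unique (hA j).1 X_in (relA j) (Bm_rel_Gamma0_mull hm h_in relX).
Qed.
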